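(* Let $H$ be a regular hexagon with vertices $W_0,\dots,W_5$ in counterclockwise order, indices taken mod 6. Let $P\in\mathbb{C}$ be arbitrary. Put $T_0=P$ and $T_{k+1}=W_k+\rho(T_k-W_k)$ for $k=0,\dots,4$. For $k=0,\dots,5$, the satellite triangle $S_k$ has base $W_{k-1}W_k$ (with $W_{-1}=W_5$) and apex $T_k$. Its oriented area $\mathcal{A}(S_k)$ is defined as the signed area of the ordered triple $(W_k,W_{k-1},T_k)$, positive when counterclockwise; equivalently $\tfrac12|W_kW_{k-1}|$ times the signed distance from $T_k$ to line $W_{k-1}W_k$, counted positive outside $H$. Then $$\sum_{k=0}^5\mathcal{A}(S_k)=\operatorname{Area}(H),$$ independently of $P$.
   Context: The plane is identified with $\mathbb{C}$, and $\rho=e^{2\pi i/3}$. $S_0$ is the triangle $W_5W_0P$. For $k\ge1$, $S_k$ is the flank triangle at $W_{k-1}$ between $H$ and the regular hexagon erected on the side $W_{k-1}T_{k-1}$ of $S_{k-1}$, and $T_k$ is the vertex of that hexagon adjacent to $W_{k-1}$. *)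

From Stdlib Require Import Reals.
From Coquelicot Require Import Coquelicot.
Open Scope R_scope.

Definition rho : C := (cos (2 * PI / 3), sin (2 * PI / 3)).

Definition omega : C := (cos (PI / 3), sin (PI / 3)).

(* W_0,...,W_5 (W : nat -> C, only indices 0..5 used) are the vertices of a
   regular hexagon, in counterclockwise order, with center c. *)
Definition regular_hexagon_ccw (W : nat -> C) : Prop :=
  exists c : C, W 0%nat <> c /\
    forall k : nat, (k < 6)%nat -> W k = (c + omega ^ k * (W 0%nat - c))%C.

Definition signed_area (A B D : C) : R :=
  / 2 * (fst (B - A)%C * snd (D - A)%C - snd (B - A)%C * fst (D - A)%C).

Definition prev6 (k : nat) : nat := match k with O => 5%nat | S j => j end.

Fixpoint T (W : nat -> C) (P : C) (k : nat) : C :=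
  match k with
  | O => P
  | S j => (W j + rho * (T W P j - W j))%C
  end.

Definition sat_area (W : nat -> C) (P : C) (k : nat) : R :=
  signed_area (W k) (W (prev6 k)) (T W P k).

(* area of the (convex, counterclockwise) hexagon W_0...W_5, shoelace formula *)
Definition hexagon_area (W : nat -> C) : R :=
  / 2 * sum_f_R0 (fun k => fst (W k) * snd (W (S k mod 6)%nat)
                          - snd (W k) * fst (W (S k mod 6)%nat)) 5.

From Stdlib Require Import Reals Lra Lia Nsatz.
From Coquelicot Require Import Coquelicot.
Open Scope R_scope.

(* Since T_{k+1} - W_k = rho (T_k - W_k), moving P by z moves T_k by rho^k z, and the
   oriented area of S_k is affine in its apex; so the total area is an affine function of P.
   Its linear part vanishes for a regular hexagon: up to a rotation by omega^(k-1), the k-th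
   term is the cross product of the edge W_0 - W_1 with omega^(k+1) z, and the sixth roots
   of unity sum to zero.  For the base point P = W_0 + W_5 - c (c the centre) the rotation
   rho (W_{k-1} - c) = W_{k+1} - c shows that every T_k = W_k + W_{k-1} - c is the point
   reflection of c through the midpoint of the base of S_k.  Then S_k has the oriented area
   of the triangle (c, W_{k-1}, W_k), and these six triangles tile the hexagon. *)

Lemma T_shift (W : nat -> C) (P z : C) (k : nat) :
  T W (P + z) k = (T W P k + Cpow rho k * z)%C.
Proof. induction k as [|k IH]; simpl; [ring | rewrite IH; ring]. Qed.

Lemma signed_area_apex_shift (A B D z : C) :
  signed_area A B (D + z) = signed_area A B D + signed_area A B (A + z).
Proof.
  destruct A, B, D, z. unfold signed_area, Cplus, Cminus, Copp; simpl; ring.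
Qed.

Lemma signed_area_midpoint_reflection (A B D : C) :
  signed_area A B (A + B - D) = signed_area D B A.
Proof.
  destruct A, B, D. unfold signed_area, Cplus, Cminus, Copp; simpl; ring.
Qed.

Lemma hexagon_area_fan (W : nat -> C) (c : C) :
  hexagon_area W = sum_f_R0 (fun k => signed_area c (W (prev6 k)) (W k)) 5.
Proof.
  unfold hexagon_area, signed_area; cbn.
  destruct c, (W 0%nat), (W 1%nat), (W 2%nat), (W 3%nat), (W 4%nat), (W 5%nat).
  unfold Cminus, Cplus, Copp; simpl; ring.
Qed.

Lemma sin_PI3_sqr : 4 * (sin (PI / 3) * sin (PI / 3)) = 3.
Proof. rewrite sin_PI3. pose proof (sqrt_sqrt 3 ltac:(lra)). nra. Qed.

(* Polynomial identities in the coordinates of [omega] and [rho], modulo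
   [s^2 = 3/4]; the halves are abstracted so that [nsatz] sees a polynomial ring. *)
Ltac coords_nsatz :=
  pose proof sin_PI3_sqr; assert (2 * / 2 = 1) by field;
  set (h := / 2) in *; set (s := sin (PI / 3)) in *; clearbody h s; nsatz.

Lemma omega_coords : omega = (/ 2, sin (PI / 3)).
Proof. unfold omega. rewrite cos_PI3. f_equal; field. Qed.

Lemma rho_coords : rho = (- / 2, sin (PI / 3)).
Proof.
  unfold rho. replace (2 * PI / 3) with (PI - PI / 3) by field.
  rewrite cos_minus, sin_PI_x, cos_PI, sin_PI, cos_PI3. f_equal; field.
Qed.

Lemma rho_omega_sqr : rho = Cpow omega 2.
Proof.
  rewrite rho_coords, omega_coords; simpl. unfold Cmult, RtoC; simpl. f_equal; coords_nsatz.
Qed.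

Lemma omega_cube : Cpow omega 3 = (-1)%C.
Proof.
  rewrite omega_coords; simpl. unfold Cmult, Copp, RtoC; simpl. f_equal; coords_nsatz.
Qed.

Section RegularHexagon.

Variables (W : nat -> C) (c : C).
Hypothesis HW : forall k, (k < 6)%nat -> W k = (c + Cpow omega k * (W 0%nat - c))%C.

Lemma hexagon_rho_rotate (k : nat) : (k < 5)%nat ->
  (rho * (W (prev6 k) - c))%C = (W (S k) - c)%C.
Proof.
  intros Hk. rewrite rho_omega_sqr, (HW (S k)), (HW (prev6 k)) by (destruct k; simpl; lia).
  destruct k as [|[|[|[|[|k]]]]]; simpl prev6; try lia; try ring.
  replace (Cpow omega 2 * (c + Cpow omega 5 * (W 0%nat - c) - c))%C
    with (Cpow omega 3 * Cpow omega 3 * Cpow omega 1 * (W 0%nat - c))%C by ring.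
  rewrite omega_cube. ring.
Qed.

Lemma T_reflect_center (k : nat) : (k <= 5)%nat ->
  T W (W 0%nat + W 5%nat - c) k = (W k + W (prev6 k) - c)%C.
Proof.
  induction k as [|k IH]; intros Hk; [reflexivity|].
  cbn [T]. rewrite IH by lia.
  replace (W k + rho * (W k + W (prev6 k) - c - W k))%C
    with (W k + rho * (W (prev6 k) - c))%C by ring.
  rewrite hexagon_rho_rotate by lia. simpl prev6. ring.
Qed.

Lemma hexagon_apex_shift_sum_eq0 (z : C) :
  sum_f_R0 (fun k => signed_area (W k) (W (prev6 k)) (W k + Cpow rho k * z)) 5 = 0.
Proof.
  rewrite rho_omega_sqr. cbn [sum_f_R0 prev6].
  rewrite !(HW 1), !(HW 2), !(HW 3), !(HW 4), !(HW 5) by lia.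
  rewrite omega_coords.
  destruct c as [c1 c2], (W 0%nat) as [u v], z as [z1 z2].
  unfold signed_area, Cplus, Cminus, Cmult, Copp; simpl.
  coords_nsatz.
Qed.

End RegularHexagon.

Theorem mainTheorem8 (W : nat -> C) (P : C) :
  regular_hexagon_ccw W ->
  sum_f_R0 (fun k => sat_area W P k) 5 = hexagon_area W.
Proof.
  intros [c [_ HW]].
  set (Q := (W 0%nat + W 5%nat - c)%C).
  replace P with (Q + (P - Q))%C by ring.
  rewrite (hexagon_area_fan W c), <- Rplus_0_r.
  rewrite <- (hexagon_apex_shift_sum_eq0 W c HW (P - Q)), <- sum_plus.
  apply sum_eq; intros k Hk. unfold sat_area, Q.
  rewrite T_shift, signed_area_apex_shift, (T_reflect_center W c HW k Hk).
  now rewrite signed_area_midpoint_reflection.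
Qed.
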